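(* There is a deterministic distributed dynamic data structure for robust $2$-hop neighborhood listing which handles edge insertions and deletions in $O(1)$ amortized rounds.
   Context: Highly dynamic network model: a synchronous network on a fixed set $V$ of $n$ nodes with unique identifiers starts as the empty graph; at the beginning of round $i$ the graph is $G_i=(V,E_i)$, obtained from the previous graph by an adversary inserting and/or deleting an arbitrary (unbounded) set of edges. At the start of each round every node is notified only of the insertions/deletions of edges incident to it; then each node may send a message of $O(\log n)$ bits to each of its current neighbors. A distributed dynamic data structure consists of a local part $DS_v$ at each node $v$; at the end of every round, $DS_v$ may be queried and must answer immediately, without any further communication, either correctly or with $\texttt{inconsistent}$. The amortized round complexity is at most $c$ if for every round $i$, the number of rounds up to round $i$ in which at least one node $v$ has $DS_v$ in an inconsistent state, divided by the total number of topology changes that occurred up to round $i$, is at most $c$. For an edge $e$, its insertion time $t_e$ is the latest round in which $e$ was inserted (initially $-1$). An edge $e=\{u,w\}$ of $G_i$ is $(v,i)$-robust if $v\in e$, or $\{v,u\}\in E_i$ and $t_e\geq t_{\{v,u\}}$, or $\{v,w\}\in E_i$ and $t_e\geq t_{\{v,w\}}$. Robust $2$-hop neighborhood listing: at the end of round $i$, $DS_v$ must respond to a query $\{u,w\}$ with $\texttt{true}$ if the edge is $(v,i)$-robust, $\texttt{false}$ if it is not, or $\texttt{inconsistent}$. *)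

From mathcomp Require Import all_boot.
Set Implicit Arguments. Unset Strict Implicit. Unset Printing Implicit Defensive.

Section Model.
Variable n : nat.
(* Nodes are 'I_n (identifiers = indices). A dynamic graph is a sequence of
   simple graphs, G i being the graph of round i (i >= 1); G 0 is the
   initial empty graph. *)
Definition dyn_graph (G : nat -> rel 'I_n) : Prop :=
  [/\ (forall u w, G 0 u w = false),
      (forall i u w, G i u w = G i w u) &
      (forall i u, G i u u = false)].

Definition inserted_at (G : nat -> rel 'I_n) (j : nat) (x y : 'I_n) : bool :=
  (0 < j) && G j x y && ~~ G j.-1 x y.

(* insertion time of {x,y} as seen at round i: latest round j <= i in which it
   was inserted (0 if never, playing the role of -1; edges of G i with G 0
   empty always have insertion time >= 1). *)
Definition ins_time (G : nat -> rel 'I_n) (i : nat) (x y : 'I_n) : nat :=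
  \max_(j < i.+1 | inserted_at G j x y) j.

Definition robust (G : nat -> rel 'I_n) (i : nat) (v u w : 'I_n) : bool :=
  G i u w &&
  [|| (v == u) || (v == w),
      G i v u && (ins_time G i v u <= ins_time G i u w) |
      G i v w && (ins_time G i v w <= ins_time G i u w)].

Definition changes (G : nat -> rel 'I_n) (i : nat) : nat :=
  \sum_(1 <= j < i.+1)
     #|[set p : 'I_n * 'I_n | (p.1 < p.2) && (G j p.1 p.2 != G j.-1 p.1 p.2)]|.
End Model.

(* A deterministic distributed dynamic data structure on n nodes, with
   messages of at most about c * log2 (n+1) bits (elements of 'I_((n+1)^c),
   plus the possibility of sending nothing). Local state and local
   computation are unrestricted. In each round a node v:
   1. gets notified of the inserted and deleted incident edges (as the sets
      of neighbours u such that {v,u} was inserted / deleted),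
   2. sends (optionally) one message to each current neighbour,
   3. updates its state from the messages received (indexed by sender).
   At the end of the round DS_v is queried via [query]; None = inconsistent. *)
Record DSAlg (n c : nat) := {
  st : Type;
  init : 'I_n -> st;
  notify : 'I_n -> st -> {set 'I_n} -> {set 'I_n} -> st;
  send : 'I_n -> st -> 'I_n -> option 'I_((n.+1) ^ c);
  recv : 'I_n -> st -> ('I_n -> option 'I_((n.+1) ^ c)) -> st;
  query : 'I_n -> st -> 'I_n -> 'I_n -> option bool
}.

Section Exec.
Variables (n c : nat) (A : DSAlg n c) (G : nat -> rel 'I_n).

Fixpoint run (i : nat) : 'I_n -> @st _ _ A :=
  match i with
  | 0 => @init _ _ A
  | i'.+1 =>
    let prev := run i' in
    let s1 := fun x => @notify _ _ A x (prev x)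
                 [set u | G i'.+1 x u && ~~ G i' x u]
                 [set u | G i' x u && ~~ G i'.+1 x u] in
    fun v => @recv _ _ A v (s1 v)
               (fun u => if G i'.+1 u v then @send _ _ A u (s1 u) v else None)
  end.

Definition inconsistent_round (i : nat) : bool :=
  [exists v, exists u, exists w, (u != w) && (@query _ _ A v (run i v) u w == None)].

Definition inconsistent_rounds (i : nat) : nat :=
  \sum_(1 <= j < i.+1) inconsistent_round j.

Definition answers_correct : Prop :=
  forall i, 0 < i -> forall v u w : 'I_n, u != w ->
    forall b, @query _ _ A v (run i v) u w = Some b -> b = robust G i v u w.
End Exec.

From mathcomp Require Import all_boot zify.
Set Implicit Arguments. Unset Strict Implicit. Unset Printing Implicit Defensive.

(* For every neighbour v, a node x must let v know the set of its incident
   edges {x,w} inserted no earlier than {x,v}: these are exactly the edges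
   that are robust for v because of {x,v}.  Node x streams this set to v,
   fixing one element of the mismatch between v's copy and the current set
   per round and telling v whether the copy is now exact; v answers
   inconsistent only while such a flag is raised.  The largest mismatch over
   all pairs drops by one in every round in which it is positive, while a
   topology change at x moves at most one element of each of x's sets, so
   the number of inconsistent rounds plus the current largest mismatch never
   exceeds the number of topology changes. *)

Section Sync.
Variable T : finType.
Implicit Types (b s t : {set T}) (w : T).

Definition mismatch b t : {set T} := [set w | (w \in b) != (w \in t)].

Definition toggle b w : {set T} := if w \in b then b :\ w else w |: b.

Definition sync_step b t : {set T} :=
  if [pick w in mismatch b t] is Some w then toggle b w else b.

Definition sync_msg b t : option (T * bool) :=
  if [pick w in mismatch b t] is Some w then Some (w, toggle b w == t) else None.

Definition apply_msg b (m : option (T * bool)) : {set T} :=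
  if m is Some (w, _) then toggle b w else b.

Definition msg_pending (m : option (T * bool)) : bool :=
  if m is Some (_, synced) then ~~ synced else false.

Lemma mismatch_eq0 b t : (mismatch b t == set0) = (b == t).
Proof.
apply/eqP/eqP => [b0t | ->]; last by apply/setP => w; rewrite !inE eqxx.
apply/setP => w; have := in_set0 w; rewrite -b0t inE.
by case: (w \in b); case: (w \in t).
Qed.

Lemma mismatch0s t : mismatch set0 t = t.
Proof. by apply/setP => w; rewrite !inE; case: (w \in t). Qed.

Lemma card_mismatch_trans b s t :
  #|mismatch b t| <= #|mismatch b s| + #|mismatch s t|.
Proof.
apply: leq_trans (leq_card_setU _ _); apply: subset_leq_card.
apply/subsetP => w; rewrite !inE.
by case: (w \in b); case: (w \in s); case: (w \in t).
Qed.

Lemma mismatch_toggle b t w :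
  w \in mismatch b t -> mismatch (toggle b w) t = mismatch b t :\ w.
Proof.
rewrite inE /toggle => bt_w; apply/setP => z; rewrite !inE.
have [-> | zw] := eqVneq z w.
  by case: (w \in b) bt_w; case: (w \in t); rewrite !inE eqxx.
by case: ifP; rewrite !inE (negbTE zw).
Qed.

Lemma card_mismatch_sync_step b t :
  #|mismatch (sync_step b t) t| = #|mismatch b t|.-1.
Proof.
rewrite /sync_step; case: pickP => [w bt_w | /= bt0].
  by rewrite mismatch_toggle // (cardsD1 w (mismatch b t)) bt_w.
suff -> : mismatch b t = set0 by rewrite cards0.
by apply/setP => w; rewrite bt0 inE.
Qed.

Lemma sync_msg_id t : sync_msg t t = None.
Proof. by rewrite /sync_msg; case: pickP => // w; rewrite !inE eqxx. Qed.

Lemma apply_sync_msg b t : apply_msg b (sync_msg b t) = sync_step b t.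
Proof. by rewrite /sync_msg /sync_step; case: pickP. Qed.

Lemma msg_pending_sync_msg b t : msg_pending (sync_msg b t) = (sync_step b t != t).
Proof.
rewrite /sync_msg /sync_step; case: pickP => [w _ | /= bt0] //=.
apply/esym/negbTE; rewrite negbK -mismatch_eq0; apply/eqP/setP => w.
by rewrite bt0 inE.
Qed.

End Sync.

Section OrdCode.
Variables (T : finType) (m : nat) (leTm : #|T| <= m).

Definition ord_code (x : T) : 'I_m := widen_ord leTm (enum_rank x).

Definition ord_decode (k : 'I_m) : option T :=
  omap enum_val (insub (val k) : option 'I_#|T|).

Lemma omap_ord_codeK : cancel (omap ord_code) (obind ord_decode).
Proof. by case=> //= x; rewrite /ord_decode /= valK /= enum_rankK. Qed.

End OrdCode.

Section Algorithm.
Variable n : nat.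

Lemma card_msg_le : #|{: 'I_n * bool}| <= (n.+1) ^ 2.
Proof. rewrite card_prod card_ord card_bool; lia. Qed.

Definition msg_code : 'I_n * bool -> 'I_((n.+1) ^ 2) := ord_code card_msg_le.
Definition msg_decode : 'I_((n.+1) ^ 2) -> option ('I_n * bool) :=
  @ord_decode _ _.

Lemma omap_msg_codeK : cancel (omap msg_code) (obind msg_decode).
Proof. exact: omap_ord_codeK. Qed.

Record node_state := NodeState {
  clock : nat;
  nbrs : {set 'I_n};
  stamp : {ffun 'I_n -> nat};
  sent : {ffun 'I_n -> {set 'I_n}};
  heard : {ffun 'I_n -> {set 'I_n}};
  pending : {ffun 'I_n -> bool}
}.

Implicit Types (s : node_state) (x v : 'I_n) (ins del : {set 'I_n}).

Definition target s v : {set 'I_n} :=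
  if v \in nbrs s then [set w in nbrs s | stamp s v <= stamp s w] else set0.

Definition init_state (_ : 'I_n) : node_state :=
  NodeState 0 set0 [ffun=> 0] [ffun=> set0] [ffun=> set0] [ffun=> false].

Definition notify_state (_ : 'I_n) s ins del : node_state :=
  let N := (nbrs s :|: ins) :\: del in
  let keep v (B : {set 'I_n}) := if (v \in N) && (v \notin ins) then B else set0 in
  NodeState (clock s).+1 N
    [ffun w => if w \in ins then (clock s).+1 else stamp s w]
    [ffun v => keep v (sent s v)] [ffun u => keep u (heard s u)] (pending s).

Definition send_msg (_ : 'I_n) s v : option 'I_((n.+1) ^ 2) :=
  omap msg_code (sync_msg (sent s v) (target s v)).

Definition recv_msgs (_ : 'I_n) s (m : 'I_n -> option 'I_((n.+1) ^ 2)) :=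
  NodeState (clock s) (nbrs s) (stamp s)
    [ffun v => sync_step (sent s v) (target s v)]
    [ffun u => apply_msg (heard s u) (obind msg_decode (m u))]
    [ffun u => msg_pending (obind msg_decode (m u))].

Definition answer (v : 'I_n) s (u w : 'I_n) : option bool :=
  if [exists x, pending s x] then None
  else Some (if v == u then w \in nbrs s else if v == w then u \in nbrs s
             else (w \in heard s u) || (u \in heard s w)).

Definition robust_listing : DSAlg n 2 :=
  Build_DSAlg init_state notify_state send_msg recv_msgs answer.

End Algorithm.

Section Analysis.
Variables (n : nat) (G : nat -> rel 'I_n).
Hypothesis HG : dyn_graph G.
Implicit Types (i j : nat) (x u v w : 'I_n).

Let A := robust_listing n.

Lemma G0 u w : G 0 u w = false. Proof. by case: HG. Qed.
Lemma G_sym i u w : G i u w = G i w u. Proof. by case: HG. Qed.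
Lemma G_irr i u : G i u u = false. Proof. by case: HG. Qed.

Lemma ins_time_sym i u w : ins_time G i u w = ins_time G i w u.
Proof. by apply: eq_bigl => j; rewrite /inserted_at G_sym (G_sym j.-1). Qed.

Lemma ins_time_le i u w : ins_time G i u w <= i.
Proof. by apply/bigmax_leqP => j _; rewrite -ltnS. Qed.

Lemma ins_timeS i u w :
  ins_time G i.+1 u w = if inserted_at G i.+1 u w then i.+1 else ins_time G i u w.
Proof.
rewrite /ins_time big_mkcond big_ord_recr /= -big_mkcond /=.
case: ifP => _; last by rewrite maxn0.
exact/maxn_idPr/(leq_trans (ins_time_le i u w)).
Qed.

Definition robust_set i x v : {set 'I_n} :=
  if G i x v then [set w | G i x w && (ins_time G i x v <= ins_time G i x w)]
  else set0.

Lemma mem_robust_set i x v w :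
  (w \in robust_set i x v) =
  [&& G i x v, G i x w & ins_time G i x v <= ins_time G i x w].
Proof. by rewrite /robust_set; case: ifP; rewrite inE. Qed.

Lemma robust_setE i v u w : robust G i v u w =
  if v == u then G i v w else if v == w then G i v u
  else (w \in robust_set i u v) || (u \in robust_set i w v).
Proof.
rewrite /robust !mem_robust_set.
have [<- | vu] := eqVneq v u; first by rewrite andbT.
have [<- | vw] := eqVneq v w; first by rewrite andbT G_sym.
rewrite (G_sym i u v) (G_sym i w v) (G_sym i w u) (ins_time_sym i u v) /=.
rewrite (ins_time_sym i w v) (ins_time_sym i w u).
by case: (G i v u); case: (G i v w); case: (G i u w).
Qed.

(* The copy of [robust_set i x v] that [x] has transmitted to [v] by the end
   of round [i]; it restarts from scratch whenever the edge {x,v} is new. *)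
Fixpoint belief i x v : {set 'I_n} :=
  if i is j.+1 then
    sync_step (if G j x v && G j.+1 x v then belief j x v else set0)
              (robust_set j.+1 x v)
  else set0.

Definition kept i x v : {set 'I_n} :=
  if G i x v && G i.+1 x v then belief i x v else set0.

Lemma beliefS i x v : belief i.+1 x v = sync_step (kept i x v) (robust_set i.+1 x v).
Proof. by []. Qed.

Definition spec_state i x : node_state n :=
  NodeState i [set w | G i x w] [ffun w => ins_time G i x w]
    [ffun v => belief i x v] [ffun u => belief i u x]
    [ffun u => belief i u x != robust_set i u x].

Definition ins_set i x := [set u | G i.+1 x u && ~~ G i x u].
Definition del_set i x := [set u | G i x u && ~~ G i.+1 x u].

Lemma target_spec j x c B1 B2 P v :
  target (NodeState c [set w | G j x w] [ffun w => ins_time G j x w] B1 B2 P) v =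
  robust_set j x v.
Proof.
rewrite /target /robust_set inE; case: ifP => // _.
by apply/setP => w; rewrite !inE !ffunE.
Qed.

Lemma notify_spec i x :
  notify_state x (spec_state i x) (ins_set i x) (del_set i x) =
  NodeState i.+1 [set w | G i.+1 x w] [ffun w => ins_time G i.+1 x w]
    [ffun v => kept i x v] [ffun u => kept i u x]
    [ffun u => belief i u x != robust_set i u x].
Proof.
rewrite /notify_state /=; congr NodeState.
- by apply/setP => w; rewrite !inE; case: (G i x w); case: (G i.+1 x w).
- apply/ffunP => w; rewrite !ffunE inE ins_timeS /inserted_at /=.
  by case: (G i x w); case: (G i.+1 x w).
- apply/ffunP => v; rewrite !ffunE !inE /kept.
  by case: (G i x v); case: (G i.+1 x v).
- apply/ffunP => u; rewrite !ffunE !inE /kept (G_sym i u) (G_sym i.+1 u).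
  by case: (G i x u); case: (G i.+1 x u).
Qed.

Lemma received_spec i u x :
  (if G i.+1 u x
   then send_msg u (notify_state u (spec_state i u) (ins_set i u) (del_set i u)) x
   else None) =
  omap (@msg_code n) (sync_msg (kept i u x) (robust_set i.+1 u x)).
Proof.
rewrite notify_spec /send_msg target_spec ffunE.
case: ifP => // ux.
by rewrite /kept /robust_set ux andbF sync_msg_id.
Qed.

Lemma run_spec i x : run A G i x = spec_state i x.
Proof.
elim: i x => [|i IH] x.
  rewrite /= /init_state /spec_state; congr NodeState.
  - by apply/setP => w; rewrite !inE G0.
  - by apply/ffunP => w; rewrite !ffunE; apply/esym/eqP; rewrite -leqn0 ins_time_le.
  - by apply/ffunP => u; rewrite !ffunE /robust_set G0 eqxx.
rewrite /= IH notify_spec /recv_msgs /spec_state; congr NodeState.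
- by apply/ffunP => v; rewrite !ffunE target_spec.
- apply/ffunP => u; rewrite !ffunE IH received_spec.
  by rewrite omap_msg_codeK apply_sync_msg.
- apply/ffunP => u; rewrite !ffunE IH received_spec.
  by rewrite omap_msg_codeK msg_pending_sync_msg.
Qed.

Lemma answer_spec i v u w :
  answer v (spec_state i v) u w =
  if [exists x, belief i x v != robust_set i x v] then None
  else Some (robust G i v u w).
Proof.
rewrite /answer /=; under eq_existsb => x do rewrite ffunE.
case: ifPn => [// | /existsPn synced]; congr Some.
have heard_robust x : belief i x v = robust_set i x v.
  by apply/eqP; have := synced x; rewrite negbK.
by rewrite robust_setE !inE !ffunE !heard_robust.
Qed.

Lemma robust_listing_correct : answers_correct A G.
Proof.
move=> i _ v u w _ b; rewrite /= run_spec answer_spec.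
by case: ifP => // _ [<-].
Qed.

Definition lag i x v := #|mismatch (belief i x v) (robust_set i x v)|.
Definition max_lag i := \max_(p : 'I_n * 'I_n) lag i p.1 p.2.

Definition changes_at j :=
  #|[set p : 'I_n * 'I_n | (p.1 < p.2) && (G j p.1 p.2 != G j.-1 p.1 p.2)]|.

Definition changed_nbrs i x := [set w | G i.+1 x w != G i x w].

Lemma card_changed_nbrs i x : #|changed_nbrs i x| <= changes_at i.+1.
Proof.
pose other (p : 'I_n * 'I_n) := if p.1 == x then p.2 else p.1.
apply: leq_trans (leq_imset_card other _); apply/subset_leq_card/subsetP => w.
rewrite inE => xw; apply/imsetP.
case: (ltngtP x w) => [lt_xw | lt_wx | /val_inj eq_xw].
- by exists (x, w); rewrite /other ?eqxx // inE lt_xw.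
- exists (w, x).
    by rewrite inE lt_wx /= (G_sym i.+1) (G_sym i).
  by rewrite /other /= ifN //; apply: contraTneq lt_wx => ->; rewrite ltnn.
- by move: xw; rewrite eq_xw !G_irr.
Qed.

Lemma mismatch_robust_setS i x v : G i x v -> G i.+1 x v ->
  mismatch (robust_set i x v) (robust_set i.+1 x v) \subset changed_nbrs i x.
Proof.
move=> xv xv'; apply/subsetP => w; rewrite !inE; apply: contraNN => /eqP same_xw.
rewrite !mem_robust_set xv xv' same_xw ins_timeS /inserted_at xv xv' /=.
case xw: (G i x w) => //=.
by rewrite ins_timeS /inserted_at same_xw xw.
Qed.

Lemma robust_set_new i x v :
  ~~ G i x v -> robust_set i.+1 x v \subset changed_nbrs i x.
Proof.
move=> xv; apply/subsetP => w; rewrite mem_robust_set inE ins_timeS /inserted_at.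
case/and3P => -> xw'; rewrite (negbTE xv) /=.
by case xw: (G i x w); rewrite ins_timeS /inserted_at xw' xw //= ltnNge ins_time_le.
Qed.

Lemma lag_le_max i x v : lag i x v <= max_lag i.
Proof. exact: (@leq_bigmax _ (fun p : 'I_n * 'I_n => lag i p.1 p.2) (x, v)). Qed.

Lemma lagS i x v : lag i.+1 x v <= (max_lag i + changes_at i.+1).-1.
Proof.
rewrite /lag beliefS card_mismatch_sync_step -!subn1 leq_sub2r //.
apply: leq_trans (leq_add (lag_le_max i x v) (card_changed_nbrs i x)).
rewrite /kept; case: ifPn => [/andP [xv xv'] | not_kept].
  apply: leq_trans (card_mismatch_trans _ (robust_set i x v) _) _.
  by rewrite leq_add2l subset_leq_card ?mismatch_robust_setS.
rewrite mismatch0s; apply: leq_trans (leq_addl _ _).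
case xv': (G i.+1 x v); last by rewrite /robust_set xv' cards0.
by rewrite subset_leq_card ?robust_set_new //; rewrite xv' andbT in not_kept.
Qed.

Lemma max_lagS i : max_lag i.+1 <= (max_lag i + changes_at i.+1).-1.
Proof. by apply/bigmax_leqP => p _; apply: lagS. Qed.

Lemma max_lag0 : max_lag 0 = 0.
Proof.
apply/eqP; rewrite -leqn0; apply/bigmax_leqP => p _.
by rewrite /lag /robust_set G0 mismatch0s cards0.
Qed.

Lemma inconsistent_round_max_lag j : inconsistent_round A G j -> 0 < max_lag j.
Proof.
case/existsP => v /existsP [u /existsP [w /andP [_]]].
rewrite /= run_spec answer_spec; case: ifP => // /existsP [x unsynced] _.
by apply: leq_trans (lag_le_max j x v); rewrite lt0n cards_eq0 mismatch_eq0.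
Qed.

Lemma inconsistent_rounds_max_lag i :
  inconsistent_rounds A G i + max_lag i <= changes G i.
Proof.
elim: i => [|i IH]; first by rewrite /inconsistent_rounds /changes !big_geq // max_lag0.
rewrite /inconsistent_rounds /changes !(big_nat_recr i.+1) //=.
rewrite -/(inconsistent_rounds A G i) -/(changes G i) -/(changes_at i.+1).
have := max_lagS i; have := @inconsistent_round_max_lag i.+1.
case: (inconsistent_round A G i.+1) => /= [/(_ isT) | _]; lia.
Qed.

End Analysis.

Theorem theorem9 :
  exists c C : nat, forall n : nat, exists A : DSAlg n c,
    forall G : nat -> rel 'I_n, dyn_graph G ->
      answers_correct A G /\
      forall i : nat, inconsistent_rounds A G i <= C * changes G i.
Proof.
exists 2, 1 => n; exists (robust_listing n) => G HG.
split; first exact: robust_listing_correct.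
move=> i; rewrite mul1n; apply: leq_trans (inconsistent_rounds_max_lag HG i).
exact: leq_addr.
Qed.
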